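(* Consider the online execution scheduling algorithm OES (described in the context) applied to a distributed GNN training job with a fixed task placement, and let $T_{OES}$ be the resulting training makespan (completion time of all tasks of iteration $N$). Let $T^*$ be the optimal makespan of the offline execution and flow scheduling problem (described in the context) for the same placement and the same data volumes. Then $T_{OES}\le \Delta\, T^*$, where $\Delta=\max_{m\in\{1,\dots,M\}}\max\{\widehat{\Delta^m_{in}},\widehat{\Delta^m_{out}}\}$; i.e., OES is $\Delta$-competitive.
   Context: Setting (distributed GNN training job). There are $M$ machines; machine $m$ has available incoming bandwidth $B^m_{in}$ and outgoing bandwidth $B^m_{out}$. The set of tasks is $J=J_g\cup J_s\cup J_w\cup J_{ps}$ (graph store servers, samplers, workers, parameter servers (PSs)); each worker has an associated set of samplers. A fixed placement assigns each task $j$ to exactly one machine ($y^m_j=1$ iff $j$ is on machine $m$). Training runs for $N$ iterations in discrete time steps $t=1,\dots,T$; task $j$ takes execution time $p_j$ in every iteration; $(j,n)$ denotes task $j$ in iteration $n$. Successor relation $succ(j,n)$: $(s,n)\in succ(g,n)$ for every graph store server $g$ and sampler $s$; $(w,n)\in succ(s,n)$ for every sampler $s$ and its associated worker $w$; $(ps,n)\in succ(w,n)$ for every worker $w$ and PS $ps$; $(w,n+1)\in succ(ps,n)$ for every PS $ps$ and worker $w$. For each $(j',n')\in succ(j,n)$ with $j,j'$ on different machines there is a flow $(j,n)\to(j',n')$ of data volume $d_{(j,n)\to(j',n')}$. Offline scheduling problem. Choose start times $x^t_{j,n}\in\{0,1\}$ (each $(j,n)$ starts exactly once; graph store servers start iteration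 1 at $t=1$) and transmission amounts $k^t_{(j,n)\to(j',n')}\ge 0$ such that: each flow transmits total amount $d_{(j,n)\to(j',n')}$; a flow transmits only at times $t\ge$ (start of $(j,n)$) $+p_j$ and strictly before the start of $(j',n')$; if $j,j'$ are on the same machine, $(j',n')$ starts no earlier than the finish of $(j,n)$; $(j,n+1)$ starts no earlier than the finish of $(j,n)$; the last transmission time of $(j,n)\to(j',n')$ is strictly before the first transmission time of $(j,n+1)\to(j',n'+1)$; and at each time $t$ the total amount sent out of (into) machine $m$ over inter-machine flows is at most $B^m_{out}$ ($B^m_{in}$). The objective is to minimize the makespan $\max_{j}\{(\text{start time of }(j,N))+p_j\}$. $T^*$ is its optimal value when all data volumes are known in advance. (Online, the data volumes are not known beforehand.) Algorithm OES. It maintains a set $F_{act}$ of active flows and a set $F_{pend}$ of pending flows. At $t=1$ all graph store servers of iteration 1 start. At each time step $t$: every task $(j,n)$ whose dependencies are all satisfied starts; for every task $(j,n)$ that finished at $t-1$ and every inter-machine flow $(j,n)\to(j',n')$ out of it, the flow is added to $F_{pend}$ if $(j,n-1)\to(j',n'-1)\in F_{act}\cup F_{pend}$, and to $F_{act}$ otherwise; for every flow $(j,n)\to(j',n')$ that finished at $t-1$, if $(j,n+1)\to(j',n'+1)\in F_{pend}$ it is moved to $F_{act}$. Then, with $\Delta^m_{in}$ (resp. $\Delta^m_{out}$) the number of flows in $F_{act}$ whose destination (resp. source) task is on machine $m$, every active flow from a task on machine $m$ to a task on machine $m'$ transmits $\min\{B^{m'}_{in}/\Delta^{m'}_{in},\,B^m_{out}/\Delta^m_{out}\}$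 data units at time $t$. It stops when all tasks of iteration $N$ are done. One-iteration degrees. Let $F_{one\_iter}$ be the set of all inter-machine flows of one training iteration (including the transfers of parameters updated by the PSs in that iteration to the workers). $\widehat{\Delta^m_{in}}$ (resp. $\widehat{\Delta^m_{out}}$) is the number of flows in $F_{one\_iter}$ whose destination (resp. source) task is placed on machine $m$. *)

From HB Require Import structures.
From mathcomp Require Import all_boot all_order all_algebra.
Set Implicit Arguments. Unset Strict Implicit. Unset Printing Implicit Defensive.
Import Order.TTheory GRing.Theory Num.Theory.

Inductive task_kind := GraphStore | Sampler | Worker | PServer.

(* A distributed GNN training job with a fixed placement.
   Time steps and iterations are numbered from 1. *)
Record gnn_job (R : realFieldType) (J : finType) (M : nat) := GnnJob {
  kind   : J -> task_kind;
  assoc  : J -> J -> bool;     (* assoc s w : sampler s is associated to worker w *)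
  place  : J -> 'I_M;          (* y^m_j = 1 iff place j = m *)
  ptime  : J -> nat;
  niter  : nat;
  bw_in  : 'I_M -> R;
  bw_out : 'I_M -> R;
  vol    : J -> J -> nat -> R  (* vol j j' n = d_{(j,n) -> (j', n + shift j j')} *)
}.

Section GNN.
Variables (R : realFieldType) (J : finType) (M : nat) (G : gnn_job R J M).

(* (j', n + shift j j') \in succ (j, n)  iff  edge j j' *)
Definition edge (i j : J) : bool :=
  match kind G i, kind G j with
  | GraphStore, Sampler => true
  | Sampler, Worker => assoc G i j
  | Worker, PServer => true
  | PServer, Worker => true
  | _, _ => false
  end.

Definition shift (i j : J) : nat :=
  match kind G i, kind G j with
  | PServer, Worker => 1
  | _, _ => 0
  end.

Definition is_flow (j j' : J) (n : nat) : bool :=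
  [&& edge j j', place G j != place G j', 0 < n & n + shift j j' <= niter G].

(* s j n : start time of (j,n) (the unique t with x^t_{j,n} = 1);
   k j j' n t : amount k^t transmitted by flow (j,n) -> (j', n + shift j j'). *)
Definition feasible (s : J -> nat -> nat) (k : J -> J -> nat -> nat -> R) : Prop :=
  (forall j n, 0 < n <= niter G -> 0 < s j n) /\
  (forall g, kind G g = GraphStore -> s g 1 = 1) /\
  (forall j n, 0 < n -> n < niter G -> s j n + ptime G j <= s j n.+1) /\
  (forall j j' n, edge j j' -> place G j = place G j' -> 0 < n ->
      n + shift j j' <= niter G -> s j n + ptime G j <= s j' (n + shift j j')) /\
  (forall j j' n t, is_flow j j' n -> (0 <= k j j' n t)%R) /\
  (forall j j' n t, is_flow j j' n -> k j j' n t != 0%R ->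
      s j n + ptime G j <= t < s j' (n + shift j j')) /\
  (forall j j' n, is_flow j j' n ->
      (\sum_(s j n + ptime G j <= t < s j' (n + shift j j')) k j j' n t)%R
        = vol G j j' n) /\
  (forall j j' n t t', is_flow j j' n -> is_flow j j' n.+1 ->
      k j j' n t != 0%R -> k j j' n.+1 t' != 0%R -> t < t') /\
  (forall (m : 'I_M) t,
      (\sum_(j : J) \sum_(j' : J) \sum_(0 <= n < (niter G).+1
          | is_flow j j' n && (place G j == m)) k j j' n t <= bw_out G m)%R) /\
  (forall (m : 'I_M) t,
      (\sum_(j : J) \sum_(j' : J) \sum_(0 <= n < (niter G).+1
          | is_flow j j' n && (place G j' == m)) k j j' n t <= bw_in G m)%R).

Definition makespan (s : J -> nat -> nat) : nat :=
  \max_(j : J) (s j (niter G) + ptime G j).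

Definition din_hat (m : 'I_M) : nat :=
  #|[pred jj : J * J | edge jj.1 jj.2 && (place G jj.1 != place G jj.2)
                        && (place G jj.2 == m)]|.
Definition dout_hat (m : 'I_M) : nat :=
  #|[pred jj : J * J | edge jj.1 jj.2 && (place G jj.1 != place G jj.2)
                        && (place G jj.1 == m)]|.
Definition Delta : nat := \max_(m < M) maxn (din_hat m) (dout_hat m).

(* State after a time step: start times of tasks, remaining volumes of flows,
   completion times of flows, and the sets F_act and F_pend. *)
Record ostate := OState {
  o_start : J -> nat -> option nat;
  o_rem   : J -> J -> nat -> R;
  o_fin   : J -> J -> nat -> option nat;
  o_act   : J -> J -> nat -> bool;
  o_pend  : J -> J -> nat -> bool
}.

Definition ostate0 : ostate :=
  OState (fun _ _ => None) (vol G) (fun _ _ _ => None)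
         (fun _ _ _ => false) (fun _ _ _ => false).

Section Step.
Variables (S : ostate) (t : nat). (* S = state after step t-1; we compute step t *)

(* (j,n) finished at some time <= t-1 (it runs during s0, ..., s0 + p_j - 1) *)
Definition finished_by (j : J) (n : nat) : bool :=
  if o_start S j n is Some s0 then s0 + ptime G j <= t else false.
(* (j,n) finished exactly at t-1 *)
Definition finished_at (j : J) (n : nat) : bool :=
  if o_start S j n is Some s0 then s0 + ptime G j == t else false.
Definition flow_done (j j' : J) (n : nat) : bool :=
  if o_fin S j j' n is Some f then f < t else false.

Definition ready (j : J) (n : nat) : bool :=
  [&& 0 < n <= niter G, o_start S j n == None,
      (n == 1) || finished_by j n.-1 &
      [forall i : J, (edge i j && (shift i j < n)) ==>
         (if place G i == place G j then finished_by i (n - shift i j)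
          else flow_done i j (n - shift i j))]].

Definition new_start (j : J) (n : nat) : option nat :=
  if o_start S j n is Some s0 then Some s0
  else if ready j n then Some t else None.

(* flows whose source task finished at t-1 *)
Definition released (j j' : J) (n : nat) : bool :=
  is_flow j j' n && finished_at j n.
Definition prev_live (j j' : J) (n : nat) : bool :=
  (1 < n) && (o_act S j j' n.-1 || o_pend S j j' n.-1).
Definition pend1 (j j' : J) (n : nat) : bool :=
  o_pend S j j' n || (released j j' n && prev_live j j' n).
Definition act1 (j j' : J) (n : nat) : bool :=
  o_act S j j' n || (released j j' n && ~~ prev_live j j' n).
(* pending flows whose previous-iteration flow finished at t-1 become active *)
Definition moved (j j' : J) (n : nat) : bool :=
  [&& 1 < n, o_fin S j j' n.-1 == Some t.-1 & pend1 j j' n].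
Definition act2 (j j' : J) (n : nat) : bool := act1 j j' n || moved j j' n.
Definition pend2 (j j' : J) (n : nat) : bool := pend1 j j' n && ~~ moved j j' n.

Definition Din (m : 'I_M) : nat :=
  \sum_(j : J) \sum_(j' : J) \sum_(0 <= n < (niter G).+1
     | [&& is_flow j j' n, act2 j j' n & place G j' == m]) 1.
Definition Dout (m : 'I_M) : nat :=
  \sum_(j : J) \sum_(j' : J) \sum_(0 <= n < (niter G).+1
     | [&& is_flow j j' n, act2 j j' n & place G j == m]) 1.

Definition rate (j j' : J) : R :=
  (Num.min (bw_in G (place G j') / (Din (place G j'))%:R)
           (bw_out G (place G j) / (Dout (place G j))%:R))%R.

Definition sent (j j' : J) (n : nat) : R :=
  if act2 j j' n then Num.min (rate j j') (o_rem S j j' n) else 0%R.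
Definition completes (j j' : J) (n : nat) : bool :=
  act2 j j' n && (o_rem S j j' n <= rate j j')%R.

Definition oes_step : ostate :=
  OState new_start
         (fun j j' n => (o_rem S j j' n - sent j j' n)%R)
         (fun j j' n => if completes j j' n then Some t else o_fin S j j' n)
         (fun j j' n => act2 j j' n && ~~ completes j j' n)
         pend2.
End Step.

Fixpoint oes_state (t : nat) : ostate :=
  if t is t'.+1 then oes_step (oes_state t') t else ostate0.

(* T_OES <= X : by time X every task of iteration N has started at some s0
   with s0 + p_j <= X. *)
Definition OES_done_by (X : nat) : Prop :=
  forall j : J, exists2 s0, o_start (oes_state X) j (niter G) = Some s0
                          & s0 + ptime G j <= X.

End GNN.

(* OES serializes the flows between a fixed pair of tasks: the flow of
   iteration n stays pending until that of iteration n - 1 has finished.  Hence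
   each pair of tasks on different machines has at most one active flow at any
   time, every machine serves at most Delta active flows in each direction, and
   an active flow (j, j') is sent at rate at least min(B_in, B_out) / Delta,
   whereas a feasible offline schedule sends at most min(B_in, B_out) per step
   on it.  By strong induction on the offline time X, OES lags the offline
   schedule by at most a factor Delta: a task starting at X offline starts by
   Delta X in OES, and a flow that transmits offline only during [phi, X) is
   active in OES with its full volume by Delta phi, so it is done before
   Delta X. *)

From HB Require Import structures.
From mathcomp Require Import all_boot all_order all_algebra.
From mathcomp Require Import zify ring lra.
Set Implicit Arguments. Unset Strict Implicit. Unset Printing Implicit Defensive.
Import Order.TTheory GRing.Theory Num.Theory.

Lemma ler_sum_term (R : numDomainType) (I : eqType) (r : seq I) (P : pred I)
    (F : I -> R) x :
  x \in r -> P x -> (forall i, P i -> 0 <= F i)%R ->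
  (F x <= \sum_(i <- r | P i) F i)%R.
Proof. by move=> xr Px F0; rewrite (big_rem x) //= Px lerDl sumr_ge0. Qed.

Lemma sum1_nat_uniq_le1 (P : pred nat) a b :
  (forall x y, P x -> P y -> x = y) -> \sum_(a <= n < b | P n) 1 <= 1.
Proof.
move=> HP; elim: b => [|b IH]; first by rewrite big_geq.
case: (leqP a b) => ab; last by rewrite big_geq.
rewrite big_mkcond big_nat_recr //= -big_mkcond /=.
case Pb: (P b); last by rewrite addn0.
rewrite big1_seq ?add0n // => n /andP[Pn]; rewrite mem_index_iota => /andP[_ nb].
by have := HP _ _ Pn Pb; lia.
Qed.

Lemma ler_sum_window (R : numDomainType) (f : nat -> R) (c : R) phi X :
  (0 <= c)%R -> (forall t, f t <= c)%R -> (forall t, f t != 0%R -> phi <= t < X) ->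
  forall a b, (\sum_(a <= t < b) f t <= ((minn b X) - phi)%:R * c)%R.
Proof.
move=> c0 fc fnz a; elim=> [|b IH]; first by rewrite big_geq // mulr_ge0.
case: (leqP a b) => ab; last by rewrite big_geq // mulr_ge0.
rewrite big_nat_recr //=.
case inW: (phi <= b < X).
  have -> : (minn b.+1 X - phi = (minn b X - phi) + 1)%N by move: inW; lia.
  by rewrite natrD mulrDl mul1r lerD.
have -> : (minn b.+1 X - phi = (minn b X - phi))%N by move: inW; lia.
have -> : f b = 0%R by apply/eqP; apply: contraFT inW => /fnz.
by rewrite addr0.
Qed.

Lemma ler_div_nat2l (F : numFieldType) (a : F) (x y : nat) :
  (0 <= a)%R -> 0 < x -> x <= y -> (a / y%:R <= a / x%:R)%R.
Proof.
move=> a0 x0 xy; apply: ler_wpM2l => //.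
by rewrite lef_pV2 ?ler_nat // posrE ltr0n //; lia.
Qed.

(** * The OES run *)

Section OES.
Variables (R : realFieldType) (J : finType) (M : nat) (G : gnn_job R J M).
Hypothesis ptime_gt0 : forall j, 0 < ptime G j.

Notation st := (oes_state G).

Lemma o_startS t j n : o_start (st t.+1) j n = new_start G (st t) t.+1 j n.
Proof. by []. Qed.
Lemma o_actS t j j' n : o_act (st t.+1) j j' n =
  act2 G (st t) t.+1 j j' n && ~~ completes G (st t) t.+1 j j' n.
Proof. by []. Qed.
Lemma o_pendS t j j' n : o_pend (st t.+1) j j' n = pend2 G (st t) t.+1 j j' n.
Proof. by []. Qed.
Lemma o_finS t j j' n : o_fin (st t.+1) j j' n =
  if completes G (st t) t.+1 j j' n then Some t.+1 else o_fin (st t) j j' n.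
Proof. by []. Qed.
Lemma o_remS t j j' n : o_rem (st t.+1) j j' n =
  (o_rem (st t) j j' n - sent G (st t) t.+1 j j' n)%R.
Proof. by []. Qed.

Lemma start_persist t t' j n x : t <= t' -> o_start (st t) j n = Some x ->
  o_start (st t') j n = Some x.
Proof.
move=> /subnK <-; elim: (t' - t) => [//|i IH] H.
by rewrite addSn o_startS /new_start IH.
Qed.

Lemma start_origin t j n x : o_start (st t) j n = Some x ->
  [/\ 0 < x <= t, o_start (st x.-1) j n = None & ready G (st x.-1) x j n].
Proof.
elim: t => [//|t IH]; rewrite o_startS /new_start.
case E: (o_start (st t) j n) => [y|].
  by move=> [Exy]; subst x; case: (IH E) => /andP[y0 yt] ? ?; rewrite y0 (leqW yt).
by case: ifP => // Hr [<-]; split; rewrite ?leqnn.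
Qed.

Lemma start_bounds t j n x : o_start (st t) j n = Some x -> 0 < x <= t.
Proof. by case/start_origin. Qed.

Lemma start_at_start t j n x : o_start (st t) j n = Some x ->
  o_start (st x) j n = Some x.
Proof.
case/start_origin=> /andP[x0 _] HN Hr.
by rewrite -(prednK x0) o_startS /new_start HN (prednK x0) Hr.
Qed.

Lemma finished_byS t j n : finished_by G (st t.+1) t.+1 j n =
  finished_by G (st t) t j n || finished_at G (st t) t.+1 j n.
Proof.
rewrite /finished_by /finished_at o_startS /new_start.
case: (o_start (st t) j n) => [y|]; first by rewrite leq_eqVlt ltnS orbC.
by case: ifP => // _; have := ptime_gt0 j; lia.
Qed.

Lemma start_after_prev_iter t j n x : o_start (st t) j n = Some x -> 1 < n ->
  exists2 y, o_start (st t) j n.-1 = Some y & y + ptime G j <= x.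
Proof.
move=> H n1; case: (start_origin H) => /andP[x0 xt] _ /and4P[_ _ Hf _].
move: Hf; rewrite (gtn_eqF n1) /= /finished_by.
case E: (o_start _ j n.-1) => [y|] // Hy.
by exists y => //; apply: start_persist E; lia.
Qed.

Lemma is_flow_prev j j' n : is_flow G j j' n -> 1 < n -> is_flow G j j' n.-1.
Proof. by rewrite /is_flow => /and4P[-> -> _ H] n1 /=; apply/andP; split; lia. Qed.

Lemma is_flow_iter j j' n : is_flow G j j' n -> 0 < n < (niter G).+1.
Proof. by rewrite /is_flow => /and4P[_ _ n0 nN]; lia. Qed.

Lemma finished_at_prev t j n : finished_at G (st t) t.+1 j n -> 1 < n ->
  finished_by G (st t) t j n.-1.
Proof.
rewrite /finished_at /finished_by.
case E: (o_start (st t) j n) => [x|] // /eqP Hx n1.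
by case: (start_after_prev_iter E n1) => y -> Hy; have := ptime_gt0 j; lia.
Qed.

(** * Invariants of OES *)

Definition tracked (S : ostate R J) j j' n : bool :=
  o_act S j j' n || o_pend S j j' n || (o_fin S j j' n != None).

Record oes_inv (t : nat) : Prop := OesInv {
  tracked_released : forall j j' n, tracked (st t) j j' n ->
    is_flow G j j' n && finished_by G (st t) t j n;
  fin_idle : forall j j' n f, o_fin (st t) j j' n = Some f ->
    [&& ~~ o_act (st t) j j' n, ~~ o_pend (st t) j j' n & f <= t];
  act_pend_excl : forall j j' n, ~~ (o_act (st t) j j' n && o_pend (st t) j j' n);
  released_tracked : forall j j' n, is_flow G j j' n ->
    finished_by G (st t) t j n -> tracked (st t) j j' n;
  earlier_fin : forall j j' n' n,
    o_act (st t) j j' n' || (o_fin (st t) j j' n' != None) -> 0 < n < n' ->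
    o_fin (st t) j j' n != None;
  rem_full : forall j j' n, ~~ o_act (st t) j j' n -> o_fin (st t) j j' n = None ->
    o_rem (st t) j j' n = vol G j j' n }.

Lemma oes_inv0 : oes_inv 0.
Proof. by split => //= j j' n; rewrite /finished_by. Qed.

Section InvariantStep.
Variable t : nat.
Let S := st t.

Lemma fin_keep j j' n : o_fin S j j' n != None -> o_fin (st t.+1) j j' n != None.
Proof. by rewrite o_finS; case: ifP. Qed.

Lemma act2_next j j' n : act2 G S t.+1 j j' n ->
  o_act (st t.+1) j j' n || (o_fin (st t.+1) j j' n != None).
Proof. by move=> H; rewrite o_actS o_finS H /=; case: ifP. Qed.

Lemma pend1_next j j' n : pend1 G S t.+1 j j' n ->
  o_pend (st t.+1) j j' n || act2 G S t.+1 j j' n.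
Proof.
move=> H; rewrite o_pendS /pend2 H /act2.
by case: (moved _ _ _ _ _ _); rewrite ?orbT.
Qed.

Lemma act2_pend1_source j j' n : act2 G S t.+1 j j' n || pend1 G S t.+1 j j' n ->
  tracked S j j' n || released G S t.+1 j j' n.
Proof.
rewrite /act2 /act1 /moved /pend1 /tracked.
case: (o_act S j j' n) => //=; case: (o_pend S j j' n) => //=.
by case: (released _ _ _ _ _ _); rewrite //= ?orbT ?andbF.
Qed.

Hypothesis HI : oes_inv t.

Lemma released_tracked_false j j' n : tracked S j j' n ->
  released G S t.+1 j j' n = false.
Proof.
case/(tracked_released HI)/andP => _.
rewrite /released /finished_by /finished_at.
case: (o_start S j n) => [y|]; last by rewrite andbF.
by move=> H; apply/negbTE; rewrite negb_and; apply/orP; right; apply/negP => /eqP; lia.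
Qed.

Lemma fin_quiet j j' n f : o_fin S j j' n = Some f ->
  act2 G S t.+1 j j' n = false /\ pend1 G S t.+1 j j' n = false.
Proof.
move=> Hf; have Hr : released G S t.+1 j j' n = false.
  by apply: released_tracked_false; rewrite /tracked Hf orbT.
case/and3P: (fin_idle HI Hf) => /negbTE Ha /negbTE Hpd _.
by rewrite /act2 /act1 /moved /pend1 Ha Hpd Hr /= !andbF.
Qed.

Lemma act2_flow j j' n : act2 G S t.+1 j j' n -> is_flow G j j' n.
Proof.
move=> Ha; have := @act2_pend1_source j j' n; rewrite Ha => /(_ isT) /orP[].
  by case/(tracked_released HI)/andP.
by case/andP.
Qed.

Lemma act2_earlier_fin j j' n' n : act2 G S t.+1 j j' n' -> 0 < n < n' ->
  o_fin S j j' n != None.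
Proof.
move=> Hact Hn.
have prev_fin : o_fin S j j' n'.-1 != None -> o_fin S j j' n != None.
  move=> Hf; case: (ltngtP n n'.-1) => [lt|gt|->] //; last by lia.
  by apply: (earlier_fin HI (n' := n'.-1)); [rewrite Hf orbT|lia].
move: Hact; rewrite /act2 /act1 /moved.
case Ha: (o_act S j j' n') => /=.
  by move=> _; apply: (earlier_fin HI (n' := n')); rewrite ?Ha.
case/orP => [/andP[Hrel]|/and3P[_ /eqP Hf _]]; last by apply: prev_fin; rewrite Hf.
have n1 : 1 < n' by lia.
rewrite /prev_live n1 /= negb_or => /andP[Hna Hnp]; apply: prev_fin.
case/andP: Hrel => Hfl Hfa.
have := released_tracked HI (is_flow_prev Hfl n1) (finished_at_prev Hfa n1).
by rewrite /tracked (negbTE Hna) (negbTE Hnp).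
Qed.

Lemma act2_uniq j j' n n' : act2 G S t.+1 j j' n -> act2 G S t.+1 j j' n' -> n = n'.
Proof.
wlog lt : n n' / n < n'.
  by move=> W H1 H2; case: (ltngtP n n') => [l|l|//]; [exact: W|apply/esym; exact: W].
move=> H1 H2; have /andP[n0 _] := is_flow_iter (act2_flow H1).
have := act2_earlier_fin H2 (_ : 0 < n < n'); rewrite n0 lt => /(_ isT).
case E: (o_fin S j j' n) => [f|] // _.
by case: (fin_quiet E); rewrite H1.
Qed.

Lemma act1_pend1_excl j j' n : act1 G S t.+1 j j' n -> ~~ pend1 G S t.+1 j j' n.
Proof.
rewrite /act1 /pend1.
case Ha: (o_act S j j' n) => /=.
  move=> _; have := act_pend_excl HI j j' n; rewrite Ha /= => /negbTE ->.
  by rewrite released_tracked_false ?/tracked ?Ha.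
case/andP=> Hr Hpl; case Hpd: (o_pend S j j' n) => /=.
  by rewrite released_tracked_false ?/tracked ?Hpd ?orbT in Hr.
by rewrite (negbTE Hpl) andbF.
Qed.

Lemma tracked_released_step j j' n : tracked (st t.+1) j j' n ->
  is_flow G j j' n && finished_by G (st t.+1) t.+1 j n.
Proof.
move=> H.
have H' : act2 G S t.+1 j j' n || pend1 G S t.+1 j j' n || (o_fin S j j' n != None).
  move: H; rewrite /tracked o_actS o_pendS /pend2 o_finS.
  case Hc: (completes _ _ _ _ _ _) => /=; first by case/andP: Hc => ->.
  by case: (act2 _ _ _ _ _ _) => //=; case: (pend1 _ _ _ _ _ _).
rewrite finished_byS.
case/orP: H' => [/act2_pend1_source/orP[H1|H1]|H1].
- by case/andP: (tracked_released HI H1) => -> ->.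
- by case/andP: H1 => -> ->; rewrite orbT.
- have /(tracked_released HI)/andP[-> ->] // : tracked S j j' n.
  by rewrite /tracked H1 orbT.
Qed.

Lemma fin_idle_step j j' n f : o_fin (st t.+1) j j' n = Some f ->
  [&& ~~ o_act (st t.+1) j j' n, ~~ o_pend (st t.+1) j j' n & f <= t.+1].
Proof.
rewrite o_finS; case Hc: (completes _ _ _ _ _ _).
  move=> [<-]; rewrite o_actS o_pendS /pend2 Hc andbF /= leqnn andbT.
  case/andP: Hc; rewrite /act2.
  case Hm: (moved _ _ _ _ _ _); first by rewrite andbF.
  by rewrite orbF andbT => /act1_pend1_excl.
move=> Hf; case: (fin_quiet Hf) => Ha Hp1.
rewrite o_actS o_pendS /pend2 Ha Hp1 /=.
by case/and3P: (fin_idle HI Hf) => _ _ /leqW.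
Qed.

Lemma act_pend_excl_step j j' n :
  ~~ (o_act (st t.+1) j j' n && o_pend (st t.+1) j j' n).
Proof.
rewrite o_actS o_pendS /pend2.
case Hm: (moved _ _ _ _ _ _); first by rewrite !andbF.
rewrite /act2 Hm orbF; apply/negP => /andP[/andP[Ha1 _] /andP[Hp1 _]].
by move: Hp1; apply/negP/act1_pend1_excl.
Qed.

Lemma released_tracked_step j j' n : is_flow G j j' n ->
  finished_by G (st t.+1) t.+1 j n -> tracked (st t.+1) j j' n.
Proof.
have from_act2 : act2 G S t.+1 j j' n -> tracked (st t.+1) j j' n.
  by case/act2_next/orP; rewrite /tracked => ->; rewrite ?orbT.
have from_pend1 : pend1 G S t.+1 j j' n -> tracked (st t.+1) j j' n.
  by case/pend1_next/orP => [H|/from_act2 //]; rewrite /tracked H orbT.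
move=> Hfl; rewrite finished_byS => /orP[Hfb|Hfa].
  case/orP: (released_tracked HI Hfl Hfb) => [/orP[Ha|Hpd]|Hf].
  - by apply: from_act2; rewrite /act2 /act1 Ha.
  - by apply: from_pend1; rewrite /pend1 Hpd.
  - by rewrite /tracked fin_keep ?orbT.
have Hrel : released G S t.+1 j j' n by rewrite /released Hfl Hfa.
case Hpl: (prev_live S j j' n).
  by apply: from_pend1; rewrite /pend1 Hrel Hpl orbT.
by apply: from_act2; rewrite /act2 /act1 Hrel Hpl orbT.
Qed.

Lemma earlier_fin_step j j' n' n :
  o_act (st t.+1) j j' n' || (o_fin (st t.+1) j j' n' != None) -> 0 < n < n' ->
  o_fin (st t.+1) j j' n != None.
Proof.
move=> H Hn; apply: fin_keep; move: H; rewrite o_actS o_finS.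
case Hc: (completes _ _ _ _ _ _) => /=.
  by move=> _; case/andP: Hc => /act2_earlier_fin /(_ Hn).
rewrite andbT => /orP[Ha|Hf]; first exact: (act2_earlier_fin Ha Hn).
by apply: (earlier_fin HI (n' := n')); rewrite ?Hf ?orbT.
Qed.

Lemma rem_full_step j j' n : ~~ o_act (st t.+1) j j' n ->
  o_fin (st t.+1) j j' n = None -> o_rem (st t.+1) j j' n = vol G j j' n.
Proof.
rewrite o_actS o_finS o_remS.
case Hc: (completes _ _ _ _ _ _) => //=; rewrite andbT => Ha Hf.
have Hoa : ~~ o_act S j j' n by apply: contra Ha; rewrite /act2 /act1 => ->.
by rewrite /sent (negbTE Ha) subr0 (rem_full HI Hoa Hf).
Qed.

Lemma oes_inv_step : oes_inv t.+1.
Proof.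
split; [exact: tracked_released_step | exact: fin_idle_step
       | exact: act_pend_excl_step | exact: released_tracked_step
       | exact: earlier_fin_step | exact: rem_full_step].
Qed.

End InvariantStep.

Lemma oes_invP t : oes_inv t.
Proof. by elim: t => [|t IH]; [exact: oes_inv0 | exact: oes_inv_step]. Qed.

Lemma fin_persist t t' j j' n f : t <= t' -> o_fin (st t) j j' n = Some f ->
  o_fin (st t') j j' n = Some f.
Proof.
move=> /subnK <-; elim: (t' - t) => [//|i IH] H.
rewrite addSn o_finS; have H' := IH H.
by case: (fin_quiet (oes_invP (i + t)) H') => Ha _; rewrite /completes Ha.
Qed.

Lemma fin_le t j j' n f : o_fin (st t) j j' n = Some f -> f <= t.
Proof. by case/(fin_idle (oes_invP t))/and3P. Qed.

Lemma fin_at_fin t j j' n f : o_fin (st t) j j' n = Some f ->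
  o_fin (st f) j j' n = Some f.
Proof.
elim: t => [//|t IH]; rewrite o_finS; case: ifP => Hc; last exact: IH.
by move=> [<-]; rewrite o_finS Hc.
Qed.

Lemma fin_none_before t t' j j' n f : o_fin (st t) j j' n = Some f -> t' < f ->
  o_fin (st t') j j' n = None.
Proof.
move=> H lt; case E: (o_fin (st t') j j' n) => [f'|] //.
have tt : t' <= t by have := fin_le H; lia.
by have := fin_le E; move: (fin_persist tt E); rewrite H => -[ef]; lia.
Qed.

Lemma pending_until_prev_fin j j' n E fp : 0 < E ->
  released G (st E.-1) E j j' n -> prev_live (st E.-1) j j' n ->
  o_fin (st fp) j j' n.-1 = Some fp -> E <= fp -> o_pend (st fp) j j' n.
Proof.
move=> E0 Hrel Hpl Hfp EF.
suff pend_from i : E + i <= fp -> o_pend (st (E + i)) j j' n.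
  by have := pend_from (fp - E); rewrite subnKC // => ->.
elim: i => [|i IHi] le_i.
  rewrite addn0 -{1}(prednK E0) o_pendS /pend2 /pend1 (prednK E0) Hrel Hpl orbT /=.
  by rewrite /moved (fin_none_before Hfp (_ : E.-1 < fp)) ?andbF //; lia.
rewrite addnS o_pendS /pend2 /pend1 IHi /=; last by lia.
by rewrite /moved (fin_none_before Hfp (_ : E + i < fp)) ?andbF //; lia.
Qed.

Lemma flow_activated_by t0 j j' n sg B : is_flow G j j' n ->
  o_start (st t0) j n = Some sg -> sg + ptime G j <= B ->
  (1 < n -> exists f, o_fin (st B.-1) j j' n.-1 = Some f) ->
  exists2 a, act2 G (st a) a.+1 j j' n &
             a.+1 <= B /\ o_rem (st a) j j' n = vol G j j' n.
Proof.
move=> Hf Hsg EB Hprev; set E := sg + ptime G j.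
have E0 : 0 < E by have := ptime_gt0 j; lia.
have HsE : o_start (st E.-1) j n = Some sg.
  by apply: (start_persist _ (start_at_start Hsg)); have := ptime_gt0 j; lia.
have Hrel : released G (st E.-1) E j j' n.
  by rewrite /released Hf /finished_at HsE eqxx.
have : ~~ tracked (st E.-1) j j' n.
  apply/negP => /(tracked_released (oes_invP _)) /andP[_].
  by rewrite /finished_by HsE; have := ptime_gt0 j; rewrite /E; lia.
rewrite /tracked !negb_or => /andP[/andP[/negbTE Ha0 /negbTE Hp0] /negPn/eqP Hf0].
case Hpl: (prev_live (st E.-1) j j' n); last first.
  exists E.-1; first by rewrite /act2 /act1 (prednK E0) Hrel Hpl /= orbT.
  by split; [rewrite (prednK E0) | apply: (rem_full (oes_invP _) _ Hf0); rewrite Ha0].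
have n1 : 1 < n by case/andP: Hpl.
case: (Hprev n1) => fp HfpB; have Hfp := fin_at_fin HfpB.
have fpE : E <= fp.
  rewrite -(prednK E0) ltnNge; apply/negP => le.
  have := fin_idle (oes_invP E.-1) (fin_persist le Hfp).
  by move: Hpl; rewrite /prev_live n1 /= => /orP[] ->; rewrite ?andbF.
have Hpf := pending_until_prev_fin E0 Hrel Hpl Hfp fpE.
exists fp; first by rewrite /act2 /moved n1 Hfp eqxx /pend1 Hpf /= orbT.
split; first by have := fin_le HfpB; lia.
apply: (rem_full (oes_invP _)).
  by have := act_pend_excl (oes_invP fp) j j' n; rewrite Hpf andbT.
case Ef: (o_fin (st fp) j j' n) => [g|] //.
by have := fin_idle (oes_invP fp) Ef; rewrite Hpf andbF.
Qed.

(** * Transmission rates *)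

Section ActiveDegrees.
Variables (t : nat) (sel : J -> J -> bool).

Definition active_count : nat :=
  \sum_(j : J) \sum_(j' : J) \sum_(0 <= n < (niter G).+1
     | [&& is_flow G j j' n, act2 G (st t) t.+1 j j' n & sel j j']) 1.

Lemma active_count_le_pairs : active_count <=
  #|[pred jj : J * J | edge G jj.1 jj.2 && (place G jj.1 != place G jj.2)
                       && sel jj.1 jj.2]|.
Proof.
apply: (@leq_trans (\sum_j \sum_j'
          ((edge G j j' && (place G j != place G j')) && sel j j' : nat))).
  apply: leq_sum => j _; apply: leq_sum => j' _.
  case C: (_ && _ && _).
    apply: sum1_nat_uniq_le1 => x y /and3P[_ Hx _] /and3P[_ Hy _].
    exact: (act2_uniq (oes_invP t) Hx Hy).
  rewrite big_pred0 // => n; apply/negbTE; apply: contraFN C.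
  by case/and3P; rewrite /is_flow => /and4P[-> -> _ _] _ ->.
apply: eq_leq; rewrite pair_bigA /= -sum1_card [RHS]big_mkcond /=.
by apply: eq_bigr => -[a b] _; rewrite inE /=; case: ifP.
Qed.

Lemma active_count_gt0 j j' n : act2 G (st t) t.+1 j j' n -> sel j j' ->
  0 < active_count.
Proof.
move=> Ha Hs; have Hf := act2_flow (oes_invP t) Ha.
rewrite /active_count (bigD1 j) //= (bigD1 j') //=.
apply: leq_trans (leq_addr _ _); apply: leq_trans (leq_addr _ _).
rewrite lt0n sum_nat_seq_neq0; apply/hasP; exists n.
  by rewrite mem_index_iota; have := is_flow_iter Hf; lia.
by rewrite Hf Ha Hs.
Qed.

End ActiveDegrees.

Lemma Din_le_Delta t m : Din G (st t) t.+1 m <= Delta G.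
Proof.
apply: leq_trans (active_count_le_pairs t (fun _ j' => place G j' == m)) _.
by apply: leq_trans (leq_maxl _ (dout_hat G m)) _; apply: (leq_bigmax m).
Qed.

Lemma Dout_le_Delta t m : Dout G (st t) t.+1 m <= Delta G.
Proof.
apply: leq_trans (active_count_le_pairs t (fun j _ => place G j == m)) _.
by apply: leq_trans (leq_maxr (din_hat G m) _) _; apply: (leq_bigmax m).
Qed.

Hypothesis bw_in_gt0 : forall m, (0 < bw_in G m)%R.
Hypothesis bw_out_gt0 : forall m, (0 < bw_out G m)%R.
Hypothesis Delta_gt0 : 0 < Delta G.

Definition link_cap (j j' : J) : R :=
  Num.min (bw_in G (place G j')) (bw_out G (place G j)).

Definition fair_share (j j' : J) : R := (link_cap j j' / (Delta G)%:R)%R.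

Lemma link_cap_gt0 j j' : (0 < link_cap j j')%R.
Proof. by rewrite /link_cap lt_min bw_in_gt0 bw_out_gt0. Qed.

Lemma rate_ge_fair_share t j j' n : act2 G (st t) t.+1 j j' n ->
  (fair_share j j' <= rate G (st t) t.+1 j j')%R.
Proof.
move=> Ha; rewrite /rate /fair_share /link_cap le_min; apply/andP; split.
- (* positivity matters, as [x / 0 = 0] *)
  have Din_gt0 : 0 < Din G (st t) t.+1 (place G j').
    exact: (active_count_gt0 (sel := fun _ b => place G b == place G j') Ha).
  apply: le_trans (ler_div_nat2l (ltW (bw_in_gt0 _)) Din_gt0 (Din_le_Delta _ _)).
  by apply: ler_wpM2r; [rewrite invr_ge0 ler0n | rewrite ge_min lexx].
- have Dout_gt0 : 0 < Dout G (st t) t.+1 (place G j).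
    exact: (active_count_gt0 (sel := fun a _ => place G a == place G j) Ha).
  apply: le_trans (ler_div_nat2l (ltW (bw_out_gt0 _)) Dout_gt0 (Dout_le_Delta _ _)).
  by apply: ler_wpM2r; [rewrite invr_ge0 ler0n | rewrite ge_min lexx orbT].
Qed.

Lemma active_flow_finishes i a j j' n : act2 G (st a) a.+1 j j' n ->
  (o_rem (st a) j j' n <= i.+1%:R * fair_share j j')%R ->
  exists f, o_fin (st (i + a.+1)) j j' n = Some f.
Proof.
elim: i a => [|i IH] a Ha Hr.
  have Hc : completes G (st a) a.+1 j j' n.
    rewrite /completes Ha /=; apply: le_trans (rate_ge_fair_share Ha).
    by rewrite mul1r in Hr.
  by exists a.+1; rewrite add0n o_finS Hc.
case Hc: (completes G (st a) a.+1 j j' n).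
  by exists a.+1; apply: (fin_persist (leq_addl _ _)); rewrite o_finS Hc.
have Hlt : (rate G (st a) a.+1 j j' < o_rem (st a) j j' n)%R.
  by move: Hc; rewrite /completes Ha /= => /negbT; rewrite -ltNge.
have Ha' : act2 G (st a.+1) a.+2 j j' n by rewrite /act2 /act1 o_actS Ha Hc.
rewrite addSnnS; apply: (IH a.+1 Ha').
rewrite o_remS /sent Ha min_l; last exact: ltW Hlt.
have := rate_ge_fair_share Ha; move: Hr.
rewrite -[i.+2]addn1 natrD mulrDl mul1r; lra.
Qed.

(** * Comparison with an offline schedule *)

Section OfflineSchedule.
Hypothesis vol_gt0 : forall j j' n, is_flow G j j' n -> (0 < vol G j j' n)%R.
Variables (s : J -> nat -> nat) (k : J -> J -> nat -> nat -> R).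
Hypothesis Hfeas : feasible G s k.

Local Notation D := (Delta G).

Lemma sched_start_gt0 j n : 0 < n <= niter G -> 0 < s j n.
Proof. by case: Hfeas => H _; apply: H. Qed.

Lemma sched_iter_order j n : 0 < n -> n < niter G -> s j n + ptime G j <= s j n.+1.
Proof. by case: Hfeas => _ [_ [H _]]; apply: H. Qed.

Lemma sched_local_order j j' n : edge G j j' -> place G j = place G j' -> 0 < n ->
  n + shift G j j' <= niter G -> s j n + ptime G j <= s j' (n + shift G j j').
Proof. by case: Hfeas => _ [_ [_ [H _]]]; apply: H. Qed.

Lemma sched_window j j' n t : is_flow G j j' n -> k j j' n t != 0%R ->
  s j n + ptime G j <= t < s j' (n + shift G j j').
Proof. by case: Hfeas => _ [_ [_ [_ [_ [H _]]]]]; apply: H. Qed.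

Lemma sched_serial j j' n t t' : is_flow G j j' n -> is_flow G j j' n.+1 ->
  k j j' n t != 0%R -> k j j' n.+1 t' != 0%R -> t < t'.
Proof. by case: Hfeas => _ [_ [_ [_ [_ [_ [_ [H _]]]]]]]; apply: H. Qed.

Lemma sched_transmits j j' n : is_flow G j j' n -> exists t, k j j' n t != 0%R.
Proof.
case: Hfeas => _ [_ [_ [_ [_ [_ [Htot _]]]]]] Hf.
have := Htot j j' n Hf; set r := index_iota _ _.
case Hh: (has (fun t => k j j' n t != 0%R) r); first by case/hasP: Hh => t _; exists t.
move=> Hs; have := vol_gt0 Hf; rewrite -Hs big1_seq ?ltxx // => t /andP[_ Ht].
by apply/eqP; apply: contraFT Hh => Hnz; apply/hasP; exists t.
Qed.

Lemma sched_le_link_cap j j' n t : is_flow G j j' n -> (k j j' n t <= link_cap j j')%R.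
Proof.
case: Hfeas => _ [_ [_ [_ [k_ge0 [_ [_ [_ [cap_out cap_in]]]]]]]] Hf.
have nN := is_flow_iter Hf.
have term_le (P : J -> J -> nat -> bool) : P j j' n ->
    (k j j' n t <= \sum_a \sum_b
                     \sum_(0 <= i < (niter G).+1 | is_flow G a b i && P a b i) k a b i t)%R.
  move=> Pn; have nonneg a b i : is_flow G a b i && P a b i -> (0 <= k a b i t)%R.
    by case/andP=> /k_ge0.
  apply: le_trans (ler_sum_term (mem_index_enum j) (isT : xpredT j) _); last first.
    by move=> a _; apply: sumr_ge0 => b _; apply: sumr_ge0 => i /nonneg.
  apply: le_trans (ler_sum_term (mem_index_enum j') (isT : xpredT j') _); last first.
    by move=> b _; apply: sumr_ge0 => i /nonneg.
  apply: ler_sum_term => [||i /nonneg //]; last by rewrite Hf Pn.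
  by rewrite mem_index_iota; lia.
rewrite /link_cap le_min; apply/andP; split.
- apply: le_trans (cap_in (place G j') t).
  exact: (term_le (fun _ b _ => place G b == place G j')).
- apply: le_trans (cap_out (place G j) t).
  exact: (term_le (fun a _ _ => place G a == place G j)).
Qed.

(* [.-1]: a task started at [D * X] needs its input flows finished before. *)
Definition flows_done_by (X : nat) : Prop :=
  forall j j' n, is_flow G j j' n -> (forall t, k j j' n t != 0%R -> t < X) ->
  exists f, o_fin (st (D * X).-1) j j' n = Some f.

Definition tasks_started_by (X : nat) : Prop :=
  forall j n, 0 < n <= niter G -> s j n = X ->
  exists sg, o_start (st (D * X)) j n = Some sg.

Lemma vol_le_window j j' n phi X : is_flow G j j' n ->
  (forall t, k j j' n t != 0%R -> phi <= t < X) ->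
  (vol G j j' n <= (X - phi)%:R * link_cap j j')%R.
Proof.
case: Hfeas => _ [_ [_ [_ [_ [_ [Htot _]]]]]] Hf Hsupp.
rewrite -(Htot j j' n Hf).
apply: le_trans (ler_sum_window (ltW (link_cap_gt0 _ _)) _ Hsupp _ _) _.
  by move=> t; apply: sched_le_link_cap.
by rewrite ler_pM2r ?link_cap_gt0 // ler_nat; lia.
Qed.

Lemma start_within_scaled X j n : (forall Y, Y < X -> tasks_started_by Y) ->
  0 < n <= niter G -> s j n + ptime G j <= X ->
  exists2 sg, o_start (st (D * X).-1) j n = Some sg & sg + ptime G j <= D * X.
Proof.
move=> IH Hn Hle; have sX : s j n < X by have := ptime_gt0 j; lia.
case: (IH _ sX j n Hn erefl) => sg Hsg; have /andP[_ sgle] := start_bounds Hsg.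
have h1 : D * s j n + D * ptime G j <= D * X by rewrite -mulnDr leq_mul2l Hle orbT.
have h2 : ptime G j <= D * ptime G j by rewrite leq_pmull.
by exists sg; [apply: start_persist Hsg; have := ptime_gt0 j; lia | lia].
Qed.

Lemma flows_done_step X :
  (forall Y, Y < X -> flows_done_by Y /\ tasks_started_by Y) -> flows_done_by X.
Proof.
move=> IH j j' n Hf HX.
case: (ex_minnP (sched_transmits Hf)) => phi Hphi phi_min.
have phiX : phi < X := HX _ Hphi.
have /andP[src_phi _] := sched_window Hf Hphi.
have /andP[n0 nN] := is_flow_iter Hf.
case: (@start_within_scaled phi j n) => [Y YX||//|sg Hsg sgE].
- by case: (IH Y (ltn_trans YX phiX)).
- by rewrite n0; lia.
have prev_done : 1 < n -> exists f, o_fin (st (D * phi).-1) j j' n.-1 = Some f.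
  move=> n1; have Hfp := is_flow_prev Hf n1.
  apply: (proj1 (IH _ phiX) _ _ _ Hfp) => t Ht.
  by apply: (sched_serial Hfp _ Ht); rewrite ?prednK //; lia.
case: (flow_activated_by Hf Hsg sgE prev_done) => a Ha [aD Hrem].
have XP : 0 < X - phi by lia.
have DX0 : 0 < D * (X - phi) by rewrite muln_gt0 Delta_gt0.
case: (@active_flow_finishes (D * (X - phi)).-1 a j j' n Ha) => [|f Hfin].
  rewrite prednK // Hrem.
  have -> : ((D * (X - phi))%:R * fair_share j j' = (X - phi)%:R * link_cap j j')%R.
    by rewrite /fair_share natrM; field; rewrite pnatr_eq0 -lt0n.
  apply: vol_le_window Hf _ => t Ht.
  by rewrite (phi_min t Ht) (HX t Ht).
exists f; apply: (fin_persist _ Hfin).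
have : D * (X - phi) + D * phi = D * X by rewrite -mulnDr subnK // ltnW.
lia.
Qed.

Lemma ready_at_scaled X j' n' : (forall Y, Y < X -> tasks_started_by Y) ->
  flows_done_by X -> 0 < n' <= niter G -> s j' n' = X ->
  o_start (st (D * X).-1) j' n' = None -> ready G (st (D * X).-1) (D * X) j' n'.
Proof.
move=> IH HF Hn sX Es.
have dep i m : 0 < m <= niter G -> s i m + ptime G i <= X ->
    finished_by G (st (D * X).-1) (D * X) i m.
  move=> Hm Hle; case: (start_within_scaled IH Hm Hle) => sg Hsg sgX.
  by rewrite /finished_by Hsg.
rewrite /ready Hn Es eqxx /=; apply/andP; split.
  case: (ltnP 1 n') => n1; last by apply/orP; left; apply/eqP; lia.
  apply/orP; right; apply: dep; first by lia.
  have [n0' nN'] : 0 < n'.-1 /\ n'.-1 < niter G by lia.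
  by have := sched_iter_order j' n0' nN'; rewrite prednK ?sX //; lia.
apply/forallP => i; apply/implyP => /andP[He Hsh].
have m0 : 0 < n' - shift G i j' by lia.
have Hmn : n' - shift G i j' + shift G i j' = n' by rewrite subnK // ltnW.
case: ifP => Hpl.
  apply: dep; first by rewrite m0; lia.
  by move: (sched_local_order He (eqP Hpl) m0); rewrite Hmn sX; apply; case/andP: Hn.
have Hfl : is_flow G i j' (n' - shift G i j').
  by rewrite /is_flow He Hpl Hmn m0; case/andP: Hn.
case: (HF i j' _ Hfl) => [t Ht|f Hfin].
  by have := sched_window Hfl Ht; rewrite Hmn sX; lia.
have T0 : 0 < D * X by rewrite muln_gt0 Delta_gt0 -sX sched_start_gt0.
by rewrite /flow_done Hfin; have := fin_le Hfin; lia.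
Qed.

Lemma tasks_started_step X : (forall Y, Y < X -> tasks_started_by Y) ->
  flows_done_by X -> tasks_started_by X.
Proof.
move=> IH HF j' n' Hn sX.
have T0 : 0 < D * X by rewrite muln_gt0 Delta_gt0 -sX sched_start_gt0.
case Es: (o_start (st (D * X).-1) j' n') => [x|].
  by exists x; rewrite -(prednK T0); apply: (start_persist (leqnSn _) Es).
exists (D * X); rewrite -{1}(prednK T0) o_startS /new_start Es (prednK T0).
by rewrite (ready_at_scaled IH HF Hn sX Es).
Qed.

Lemma all_done_by X : flows_done_by X /\ tasks_started_by X.
Proof.
elim/ltn_ind: X => X IH; have HF := flows_done_step IH.
by split=> //; apply: tasks_started_step HF => Y /IH [].
Qed.

Lemma oes_done_by_scaled_makespan : 0 < niter G -> OES_done_by G (D * makespan G s).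
Proof.
move=> N0 j; have Hn : 0 < niter G <= niter G by rewrite N0 leqnn.
have le_mk : s j (niter G) + ptime G j <= makespan G s by apply: (leq_bigmax j).
have [Y YX|sg Hsg sgD] := start_within_scaled _ Hn le_mk.
  by case: (all_done_by Y).
by exists sg => //; apply: start_persist Hsg; lia.
Qed.

End OfflineSchedule.

End OES.

Theorem theorem1 (R : realFieldType) (J : finType) (M : nat)
  (G : gnn_job R J M) :
  0 < niter G ->
  (forall j, 0 < ptime G j) ->
  (forall m, 0 < bw_in G m)%R ->
  (forall m, 0 < bw_out G m)%R ->
  (forall j j' n, is_flow G j j' n -> 0 < vol G j j' n)%R ->
  0 < Delta G ->
  forall (s : J -> nat -> nat) (k : J -> J -> nat -> nat -> R),
    feasible G s k -> OES_done_by G (Delta G * makespan G s).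
Proof.
move=> N0 Hp Hbin Hbout Hvol HD s k Hf.
exact: (oes_done_by_scaled_makespan Hp Hbin Hbout HD Hvol Hf N0).
Qed.
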